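(* Let $\nu$ be a bounded continuous valuation on Johnstone's dcpo $\mathcal J$ (Scott topology). For each Scott-open $U\subseteq\mathcal J$ let $\nu^*(U)=\nu(U)-\sum_{a\in N}\nu_{\{a\}}(U)$. Then $\nu^*$ is a bounded continuous valuation on $\mathcal J$.
   Context: Johnstone's dcpo: $\mathcal J=\mathbb N\times(\mathbb N\cup\{\infty\})$ ordered by $(a,b)\le(c,d)$ iff either ($a=c$ and $b\le d$) or ($d=\infty$ and $b\le c$). $N=\mathcal J\setminus\{(i,\infty):i\in\mathbb N\}$ is the set of non-maximal elements. For $n\in\mathbb N$ let $L_n=\{(j,n):j\in\mathbb N\}$. For $a=(j,n)\in N$, the sets $U_a=\{a\}\cup{\uparrow}L_{n+1}$ and $V_a={\uparrow}L_{n+1}$ are Scott-open with $V_a\subseteq U_a$ and $U_a\setminus V_a=\{a\}$, and $\nu_{\{a\}}$ is the continuous valuation $W\mapsto\nu(W\cap U_a)-\nu(W\cap V_a)$. A valuation is a strict, monotone, modular map $\mathcal OX\to[0,\infty]$; continuous if it preserves directed suprema of opens; bounded if $\nu(X)<\infty$. *)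

From HB Require Import structures.
From mathcomp Require Import all_boot all_order all_algebra.
From mathcomp Require Import all_classical all_reals.
From mathcomp Require Import ereal esum.
Set Implicit Arguments. Unset Strict Implicit. Unset Printing Implicit Defensive.
Import Order.TTheory GRing.Theory Num.Theory.
Local Open Scope classical_set_scope.
Local Open Scope ereal_scope.

(* Johnstone's dcpo: N x (N u {oo}); [None] encodes oo. *)
Definition J : Type := (nat * option nat)%type.

Definition leo (b d : option nat) : Prop :=
  match b, d with
  | _, None => True
  | None, Some _ => False
  | Some m, Some n => (m <= n)%N
  end.

Definition Jle (x y : J) : Prop :=
  (x.1 = y.1 /\ leo x.2 y.2) \/ (y.2 = None /\ leo x.2 (Some y.1)).

Definition upper_set (U : set J) : Prop :=
  forall x y, U x -> Jle x y -> U y.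
Definition directed (D : set J) : Prop :=
  (exists d, D d) /\
  forall x y, D x -> D y -> exists z, D z /\ Jle x z /\ Jle y z.
Definition is_sup (D : set J) (s : J) : Prop :=
  (forall d, D d -> Jle d s) /\ (forall u, (forall d, D d -> Jle d u) -> Jle s u).
Definition scott_open (U : set J) : Prop :=
  upper_set U /\
  forall D s, directed D -> is_sup D s -> U s -> exists d, D d /\ U d.

Definition Nset : set J := [set a | a.2 <> None].
Definition Lset (n : nat) : set J := [set x | x.2 = Some n].
Definition up (A : set J) : set J := [set y | exists x, A x /\ Jle x y].

(* U_a = {a} u up L_(n+1), V_a = up L_(n+1), for a = (j,n) in N
   (arbitrary value set0 for a maximal, never used) *)
Definition Ua (a : J) : set J :=
  match a.2 with Some n => [set a] `|` up (Lset n.+1) | None => set0 end.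
Definition Va (a : J) : set J :=
  match a.2 with Some n => up (Lset n.+1) | None => set0 end.

Section Valuations.
Variable R : realType.

Definition valuation (nu : set J -> \bar R) : Prop :=
  [/\ nu set0 = 0,
      (forall U, scott_open U -> 0 <= nu U),
      (forall U V, scott_open U -> scott_open V -> U `<=` V -> nu U <= nu V) &
      (forall U V, scott_open U -> scott_open V ->
         nu U + nu V = nu (U `|` V) + nu (U `&` V))].

Definition directed_family (F : set (set J)) : Prop :=
  (exists U, F U) /\
  forall U V, F U -> F V -> exists W, F W /\ U `<=` W /\ V `<=` W.

Definition continuous_valuation (nu : set J -> \bar R) : Prop :=
  valuation nu /\
  forall F : set (set J), (forall U, F U -> scott_open U) -> directed_family F ->
    nu (\bigcup_(U in F) U) = ereal_sup (nu @` F).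

Definition bounded_valuation (nu : set J -> \bar R) : Prop :=
  valuation nu /\ nu setT < +oo.

Definition nu_pt (nu : set J -> \bar R) (a : J) (W : set J) : \bar R :=
  nu (W `&` Ua a) - nu (W `&` Va a).

Definition nu_star (nu : set J -> \bar R) (U : set J) : \bar R :=
  nu U - esum Nset (fun a => nu_pt nu a U).

End Valuations.

From mathcomp Require Import all_boot all_order all_algebra.
From mathcomp Require Import all_classical all_reals.
From mathcomp Require Import ereal esum.
From mathcomp Require Import lra.
Set Implicit Arguments. Unset Strict Implicit. Unset Printing Implicit Defensive.
Import Order.TTheory GRing.Theory Num.Theory.
Local Open Scope classical_set_scope.

(** Scott-open subsets of [J] are the upper sets which, with a maximal point
    (c,oo), contain some point (c,n) of its column.  For such a W and a in N,
    nu_{a}(W) is the mass m(a) = nu(U_a) - nu(V_a) >= 0 if a is in W and 0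
    otherwise, so nu*(W) = nu(W) - (sum of m over the non-maximal points of W).

    Adding non-maximal points to an open set, keeping it open, increases nu by
    exactly their total mass.  For opens U <= V, after enlarging U by the
    points of V of high level, this yields nu(U) + (mass of N n V \ U) <= nu(V);
    hence nu* is finite and monotone, and it is modular because nu is.  If U
    also contains the maximal points of V, then V is the directed union of the
    finite open extensions of U inside V, so continuity of nu gives equality.
    As a directed family of opens has a member containing all maximal points of
    its union, nu* is continuous. *)

Lemma finite_set_ind (T : eqType) (P : set T -> Prop) :
  (forall S, finite_set S -> (forall a, S a -> P (S `\ a)) -> P S) ->
  forall S, finite_set S -> P S.
Proof.
move=> IH S /finite_seqP[s ->].
elim: {s}(size s).+1 {-2}s (ltnSn (size s)) => // n IHn s sn.
apply: IH => [|a sa]; first exact: finite_seq.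
have -> : [set` s] `\ a = [set` seq.filter (predC1 a) s].
  apply/seteqP; split => x; rewrite /= mem_filter /=.
  - by move=> [-> /eqP ->].
  - by move=> /andP[/eqP ? ->].
apply: IHn; rewrite -ltnS (leq_trans _ sn) // ltnS size_filter.
rewrite -(count_predC (pred1 a)) -add1n leq_add2r.
by rewrite -has_count has_pred1.
Qed.

Lemma finite_set_bounded (T : eqType) (f : T -> nat) (S : set T) :
  finite_set S -> exists M, forall x, S x -> (f x < M)%N.
Proof.
move=> /finite_seqP[s ->]; exists (\max_(x <- s) f x).+1 => x sx.
by rewrite ltnS (@leq_bigmax_seq _ s xpredT f x).
Qed.

Lemma exists_argmin_nat T (f : T -> nat) (S : set T) : S !=set0 ->
  exists2 a, S a & forall x, S x -> (f a <= f x)%N.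
Proof.
move=> [x0 Sx0]; apply: contrapT => nomin.
suff lb k x : S x -> (k <= f x)%N by have := lb (f x0).+1 _ Sx0; rewrite ltnn.
elim: k x => // k IH x Sx; rewrite ltn_neqAle IH // andbT.
by apply/eqP => kx; apply: nomin; exists x => // y Sy; rewrite -kx IH.
Qed.

(** * Order and Scott topology of [J] *)

Definition level (x : J) : nat := odflt 0%N x.2.

Definition above (k : nat) : set J :=
  [set x | if x.2 is Some l then (k <= l)%N else True].

Lemma leo_refl b : leo b b.
Proof. by case: b => /=. Qed.

Lemma leo_trans a b c : leo a b -> leo b c -> leo a c.
Proof. by case: a b c => [a|] [b|] [c|] //=; apply: leq_trans. Qed.

Lemma Jle_refl x : Jle x x.
Proof. by left; split => //; apply: leo_refl. Qed.

Lemma Jle_trans x y z : Jle x y -> Jle y z -> Jle x z.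
Proof.
case: x y z => [x1 x2] [y1 y2] [z1 z2]; rewrite /Jle /=.
move=> [[<- h1]|[e1 h1]] [[<- h2]|[e2 h2]].
- by left; split => //; apply: leo_trans h1 h2.
- by right; split => //; apply: leo_trans h1 h2.
- by subst y2; case: z2 h2 => // _; right.
- by subst y2.
Qed.

Lemma Jle_nonmax x j n : Jle x (j, Some n) ->
  x.1 = j /\ exists2 k, x.2 = Some k & (k <= n)%N.
Proof.
by case: x => x1 [k|] [[/= -> h]|[]//]; split => //; exists k.
Qed.

Lemma Jle_max x c :
  Jle x (c, None) <-> x.1 = c \/ exists2 k, x.2 = Some k & (k <= c)%N.
Proof.
case: x => x1 [k|]; rewrite /Jle /=; split.
- by move=> [[-> _]|[_ h]]; [left|right; exists k].
- by move=> [->|[k' [<-] h]]; [left|right].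
- by move=> [[-> _]|[_ []]]; left.
- by move=> [->|[k' //]]; left.
Qed.

Lemma Jle_max_nonmax c j n : ~ Jle (c, None) (j, Some n).
Proof. by case=> -[]. Qed.

Lemma Jle_column j k l : (k <= l)%N -> Jle (j, Some k) (j, Some l).
Proof. by left. Qed.

Lemma Jle_to_max j k c : (k <= c)%N -> Jle (j, Some k) (c, None).
Proof. by right. Qed.

Lemma Jle_column_max j k : Jle (j, Some k) (j, None).
Proof. by left. Qed.

Lemma Jle_nonmax_level x j n : Jle x (j, Some n) -> (n <= level x)%N ->
  x = (j, Some n).
Proof.
case: x => x1 x2 /Jle_nonmax[/= -> [k /= -> kn]] nk.
by rewrite /level /= in nk; rewrite (@anti_leq k n) ?kn.
Qed.

Lemma up_Lset k : up (Lset k) = above k.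
Proof.
apply/seteqP; split => [y [x [Lx]]|y hy].
- by case: y => y1 [l|] //; rewrite /Jle /= Lx /= => -[[_ //]|[//]].
- by exists (y.1, Some k); split => //; left; split.
Qed.

Definition column (c : nat) : set J := [set x | x.1 = c /\ x.2 <> None].

Lemma column_directed c : directed (column c).
Proof.
split; first by exists (c, Some 0%N).
move=> [a [b|]] [a' [b'|]] [/= -> ?] [/= -> ?] //.
exists (c, Some (maxn b b')); split => //.
by split; apply: Jle_column; rewrite ?leq_maxl ?leq_maxr.
Qed.

Lemma column_sup c : is_sup (column c) (c, None).
Proof.
split; first by move=> [a [b|]] [/= -> //] _; left.
have col k : column c (c, Some k) by [].
move=> [u1 [m|]] hu.
- have /Jle_nonmax[_ [k [<-]]] := hu _ (col m.+1).
  by rewrite ltnn.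
- have /Jle_max[/= ->|[k [<-]]] := hu _ (col u1.+1); first by left.
  by rewrite ltnn.
Qed.

Lemma scott_open_maximal U c : scott_open U -> U (c, None) ->
  exists n, U (c, Some n).
Proof.
move=> [_ sc] /(sc _ _ (column_directed c) (column_sup c)).
by case=> -[a [n|]] [[/= -> //] Un]; exists n.
Qed.

Lemma sup_nonmax_mem D d0 j m : D d0 -> is_sup D (j, Some m) -> D (j, Some m).
Proof.
move=> Dd0 [ub lub]; apply: contrapT => nDjm.
have below d : D d -> d.1 = j /\ exists2 k, d.2 = Some k & (k < m)%N.
  move=> Dd; have [dj [k dk km]] := Jle_nonmax (ub _ Dd); split => //.
  exists k => //; rewrite ltn_neqAle km andbT; apply/eqP => ekm; apply: nDjm.
  by case: d Dd dj dk => a b Dd /= <- bk; rewrite -ekm -bk.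
have [_ [k _ km]] := below _ Dd0.
have m_gt0 : (0 < m)%N by rewrite (leq_ltn_trans (leq0n k) km).
have /Jle_nonmax[_ [l [<-]]] : Jle (j, Some m) (j, Some m.-1).
  apply: lub => -[a b] /below[/= -> [k' /= -> k'm]]; apply: Jle_column.
  by rewrite -ltnS prednK.
by rewrite leqNgt ltn_predL m_gt0.
Qed.

Lemma directed_nonmax_column D : directed D -> D `<=` Nset ->
  forall x y, D x -> D y -> x.1 = y.1.
Proof.
move=> [_ dir] DN x y Dx Dy; have [[z1 [n|]] [Dz [xz yz]]] := dir _ _ Dx Dy.
  by rewrite (Jle_nonmax xz).1 (Jle_nonmax yz).1.
by have := DN _ Dz.
Qed.

Lemma scott_openP U : scott_open U <->
  upper_set U /\ (forall c, U (c, None) -> exists n, U (c, Some n)).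
Proof.
split=> [oU|[uU mU]]; first by split=> [|c]; [case: oU|exact: scott_open_maximal].
split=> // D [s1 s2] dD [ub lub] Us; apply: contrapT => nDU.
have notU d : D d -> ~ U d by move=> Dd Ud; apply: nDU; exists d.
have [d0 Dd0] := dD.1.
case: s2 ub lub Us => [m|] ub lub Us.
  exact: notU _ (sup_nonmax_mem Dd0 (conj ub lub)) Us.
have [n Un] := mU _ Us.
have DN : D `<=` Nset.
  move=> [a [b|]] Dd // _; apply: (notU _ Dd).
  by have /Jle_max[/= ->|[]//] := ub _ Dd.
have levelD d : D d -> (level d <= maxn s1 n)%N.
  move=> Dd; have /Jle_max[dc|[k dk kc]] := ub _ Dd; last first.
    by rewrite /level dk (leq_trans kc) ?leq_maxl.
  case: d Dd dc => a [b|] Dd /= dc; last by have := DN _ Dd.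
  rewrite (leq_trans _ (leq_maxr _ _)) // leqNgt; apply/negP => nb.
  by apply: (notU _ Dd); apply: uU Un _; rewrite dc; apply/Jle_column; rewrite ltnW.
apply: (@Jle_max_nonmax s1 d0.1 (maxn s1 n)); apply: lub => -[a [b|]] Dd.
  by rewrite -(directed_nonmax_column dD DN Dd Dd0); apply: Jle_column (levelD _ Dd).
by have := DN _ Dd.
Qed.

Lemma open_upper U : scott_open U -> upper_set U.
Proof. by case. Qed.

Lemma open_above k : scott_open (above k).
Proof.
apply/scott_openP; split=> [|c _]; last by exists k; rewrite /above /=.
move=> [x1 x2] [y1 y2]; rewrite /above /= => kx [[_]|[/= -> //]].
by case: x2 kx => [x2|] kx; case: y2 => [y2|] //= /(leq_trans kx).
Qed.

Lemma open_set0 : scott_open set0.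
Proof. by apply/scott_openP; split. Qed.

Lemma open_setT : scott_open setT.
Proof. by apply/scott_openP; split => // c _; exists 0%N. Qed.

Lemma open_bigcup (F : set (set J)) : (forall U, F U -> scott_open U) ->
  scott_open (\bigcup_(U in F) U).
Proof.
move=> FO; apply/scott_openP; split.
- by move=> x y [U FU Ux] xy; exists U => //; apply: open_upper (FO _ FU) _ _ Ux xy.
- move=> c [U FU Uc]; have [n Un] := scott_open_maximal (FO _ FU) Uc.
  by exists n, U.
Qed.

Lemma open_setU U V : scott_open U -> scott_open V -> scott_open (U `|` V).
Proof.
move=> oU oV; apply/scott_openP; split.
- move=> x y [Ux|Vx] xy; [left; apply: open_upper oU _ _ Ux xy|right].
  exact: open_upper oV _ _ Vx xy.
- move=> c [/(scott_open_maximal oU)|/(scott_open_maximal oV)] [n h].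
  + by exists n; left.
  + by exists n; right.
Qed.

Lemma open_setI U V : scott_open U -> scott_open V -> scott_open (U `&` V).
Proof.
move=> oU oV; apply/scott_openP; split.
- move=> x y [Ux Vx] xy.
  by split; [apply: open_upper oU _ _ Ux xy|apply: open_upper oV _ _ Vx xy].
- move=> c [/(scott_open_maximal oU) [n Un] /(scott_open_maximal oV) [n' Vn']].
  exists (maxn n n'); split.
  + by apply: open_upper oU _ _ Un _; apply/Jle_column/leq_maxl.
  + by apply: open_upper oV _ _ Vn' _; apply/Jle_column/leq_maxr.
Qed.

Definition maxpts (A : set J) : set nat := [set c | A (c, None)].

Lemma open_between U X : scott_open U -> upper_set X -> U `<=` X ->
  maxpts X `<=` maxpts U -> scott_open X.
Proof.
move=> oU uX UX XU; apply/scott_openP; split => // c /XU /(scott_open_maximal oU).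
by move=> [n Un]; exists n; apply: UX.
Qed.

Lemma open_setU_nonmax U S : scott_open U -> S `<=` Nset ->
  upper_set (U `|` S) -> scott_open (U `|` S).
Proof.
move=> oU SN uUS; apply: open_between oU uUS (fun x => @or_introl _ _) _.
by move=> c [//|/SN].
Qed.

Lemma Va_nonmax j n : Va (j, Some n) = above n.+1.
Proof. by rewrite /Va /= up_Lset. Qed.

Lemma Ua_nonmax j n : Ua (j, Some n) = [set (j, Some n)] `|` above n.+1.
Proof. by rewrite /Ua /= up_Lset. Qed.

Lemma Va_sub_Ua a : Va a `<=` Ua a.
Proof. by case: a => j [n|] //; rewrite Va_nonmax Ua_nonmax => x; right. Qed.

Lemma Ua_setU1 a : Nset a -> Ua a = [set a] `|` Va a.
Proof. by case: a => j [n|] // _; rewrite Ua_nonmax Va_nonmax. Qed.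

Lemma notin_Va a : ~ Va a a.
Proof. by case: a => j [n|] //; rewrite Va_nonmax /above /= ltnn. Qed.

Lemma open_Va a : Nset a -> scott_open (Va a).
Proof. by case: a => j [n|] // _; rewrite Va_nonmax; apply: open_above. Qed.

Lemma open_Ua a : Nset a -> scott_open (Ua a).
Proof.
case: a => j [n|] // _; rewrite Ua_nonmax; apply: (open_between (open_above n.+1)).
- move=> x y [->|nx] xy; last by right; apply: open_upper (open_above _) _ _ nx xy.
  case: y xy => y1 [l|] xy; last by right.
  have [/= -> [k [<-]]] := Jle_nonmax xy; rewrite leq_eqVlt => /orP[/eqP ->|nl].
  + by left.
  + by right.
- by move=> x; right.
- by move=> c [|].
Qed.

Definition gap_above (U V : set J) (x : J) : set J :=
  [set y | ((Nset `&` V) `\` U) y /\ Jle x y].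

Lemma finite_gap_above U V x : scott_open U -> upper_set V ->
  maxpts V `<=` maxpts U -> V x -> finite_set (gap_above U V x).
Proof.
move=> oU uV VU; case: x => j [n|] Vx; last first.
  apply: sub_finite_set (finite_set0 J) => -[a [k|]] [[[Ny _] _] xy] //.
  exact: Jle_max_nonmax xy.
have [n0 Un0] := scott_open_maximal oU (VU _ (uV _ _ Vx (Jle_column_max j n))).
apply: sub_finite_set (finite_image (fun k => (j, Some k)) (finite_II n0)).
move=> [a [k|]] [[[Ny _] nUy] xy] //; have [/= ja _] := Jle_nonmax xy; subst a.
exists k => //=; rewrite ltnNge; apply/negP => n0k; apply: nUy.
exact: open_upper oU _ _ Un0 (@Jle_column j n0 k n0k).
Qed.

Lemma upper_setU_gap_above U V (S : set J) : upper_set U -> upper_set V ->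
  maxpts V `<=` maxpts U -> upper_set (U `|` \bigcup_(x in S) gap_above U V x).
Proof.
move=> uU uV VU y z [Uy|[x Sx [[[Ny Vy] nUy] xy]]] yz; first by left; apply: uU Uy yz.
have Vz := uV _ _ Vy yz; have [Uz|nUz] := pselect (U z); first by left.
right; exists x => //; split; last exact: Jle_trans xy yz.
split=> //; split=> //; case: z Vz nUz {yz} => c [k|] // Vz nUz _.
exact: nUz (VU _ Vz).
Qed.

Definition finite_extension (U V S : set J) : Prop :=
  [/\ finite_set S, S `<=` (Nset `&` V) `\` U & upper_set (U `|` S)].

Lemma open_finite_extension U V S : scott_open U -> finite_extension U V S ->
  scott_open (U `|` S).
Proof. by move=> oU [_ SV uUS]; apply: open_setU_nonmax => // x /SV[[]]. Qed.

Lemma directed_finite_extensions U V : upper_set U ->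
  directed_family [set U `|` S | S in finite_extension U V].
Proof.
move=> uU; split.
  exists U, set0; last by rewrite setU0.
  by split; [exact: finite_set0|exact: sub0set|rewrite setU0].
move=> _ _ [S1 [f1 D1 u1] <-] [S2 [f2 D2 u2] <-]; exists (U `|` (S1 `|` S2)).
split; last by split=> x [Ux|Sx]; [left|right; left|left|right; right].
exists (S1 `|` S2) => //; split; first by rewrite finite_setU.
  by move=> x [/D1|/D2].
have -> : U `|` (S1 `|` S2) = (U `|` S1) `|` (U `|` S2) by rewrite setUACA setUid.
by move=> x y [/u1 h|/u2 h] /h; [left|right].
Qed.

Lemma bigcup_finite_extensions U V : scott_open U -> scott_open V ->
  U `<=` V -> maxpts V `<=` maxpts U ->
  V = \bigcup_(X in [set U `|` S | S in finite_extension U V]) X.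
Proof.
move=> oU oV UV VU.
apply/seteqP; split=> [x Vx|x [_ [S [_ SV _] <-] [/UV|/SV[[]]]]] //.
have [Ux|nUx] := pselect (U x).
  exists U => //; exists set0; last by rewrite setU0.
  by split; [exact: finite_set0|exact: sub0set|rewrite setU0; apply: open_upper].
have Nx : Nset x by case: x Vx nUx => c [n|] // /VU.
exists (U `|` gap_above U V x); last by right; split; last exact: Jle_refl.
exists (gap_above U V x) => //; split.
- exact: finite_gap_above oU (open_upper oV) VU Vx.
- by move=> y [].
- rewrite -[gap_above U V x]bigcup_set1.
  exact: upper_setU_gap_above (open_upper oU) (open_upper oV) VU.
Qed.

Lemma open_maxpts_cofinite U x : scott_open U -> U x ->
  exists n0, forall c, (n0 <= c)%N -> maxpts U c.
Proof.
move=> oU; case: x => a [l|] Ux.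
  by exists l => c lc; apply: open_upper oU _ _ Ux (Jle_to_max a lc).
have [n Un] := scott_open_maximal oU Ux.
by exists n => c nc; apply: open_upper oU _ _ Un (Jle_to_max a nc).
Qed.

Lemma directed_open_maxpts (F : set (set J)) :
  (forall U, F U -> scott_open U) -> directed_family F ->
  exists2 U0, F U0 & maxpts (\bigcup_(U in F) U) `<=` maxpts U0.
Proof.
move=> FO [[U1 FU1] dir].
(* Some member contains all (c, oo) with c >= n0; the finitely many other
   maximal points of the union are then collected one at a time. *)
have [[x [U2 FU2 U2x]]|empty] := pselect (\bigcup_(U in F) U !=set0); last first.
  by exists U1 => // c Fc; case: empty; exists (c, None).
have [n0 big] := open_maxpts_cofinite (FO _ FU2) U2x.
suff cover_below k : exists U, [/\ F U, U2 `<=` U &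
    forall c, (c < k)%N -> maxpts (\bigcup_(U in F) U) c -> maxpts U c].
  have [U [FU U2U cover]] := cover_below n0; exists U => // c Fc.
  by case: (ltnP c n0) => [/cover|/big /U2U]; apply.
elim: k => [|k [U [FU U2U cover]]]; first by exists U2; split.
have [[U' FU' U'k]|nk] := pselect (maxpts (\bigcup_(U in F) U) k).
  have [U'' [FU'' [UU'' U'U'']]] := dir _ _ FU FU'.
  exists U''; split=> // [y /U2U /UU''//|c].
  rewrite ltnS leq_eqVlt => /orP[/eqP -> _|ck /(cover _ ck) /UU''//].
  exact: U'U'' U'k.
exists U; split=> // c; rewrite ltnS leq_eqVlt => /orP[/eqP -> //|ck].
exact: cover.
Qed.

(** * Point masses of a bounded valuation *)

Section PointMasses.
Local Open Scope ring_scope.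
Variables (R : realType) (nu : set J -> \bar R).
Hypothesis nu0 : nu set0 = 0%E.
Hypothesis nu_ge0 : forall U, scott_open U -> (0 <= nu U)%E.
Hypothesis nu_le : forall U V, scott_open U -> scott_open V -> U `<=` V ->
  (nu U <= nu V)%E.
Hypothesis nu_mod : forall U V, scott_open U -> scott_open V ->
  (nu U + nu V = nu (U `|` V) + nu (U `&` V))%E.
Hypothesis nuT : (nu setT < +oo)%E.

Lemma nu_fin U : scott_open U -> nu U \is a fin_num.
Proof.
move=> oU; rewrite ge0_fin_numE ?nu_ge0 //.
by apply: le_lt_trans nuT; apply: nu_le => //; apply: open_setT.
Qed.

Definition nur U : R := fine (nu U).

Lemma nurE U : scott_open U -> nu U = (nur U)%:E.
Proof. by move=> oU; rewrite fineK ?nu_fin. Qed.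

Lemma nur0 : nur set0 = 0.
Proof. by rewrite /nur nu0. Qed.

Lemma nur_le U V : scott_open U -> scott_open V -> U `<=` V -> nur U <= nur V.
Proof. by move=> oU oV UV; rewrite -lee_fin -!nurE // nu_le. Qed.

Lemma nur_mod U V : scott_open U -> scott_open V ->
  nur U + nur V = nur (U `|` V) + nur (U `&` V).
Proof.
move=> oU oV; have oUV := open_setU oU oV; have oIUV := open_setI oU oV.
by apply: EFin_inj; rewrite !EFinD -!nurE // nu_mod.
Qed.

Definition mass a : R := nur (Ua a) - nur (Va a).

Lemma mass_ge0 a : Nset a -> 0 <= mass a.
Proof.
move=> Na; rewrite subr_ge0.
by apply: nur_le; [exact: open_Va|exact: open_Ua|exact: Va_sub_Ua].
Qed.

Lemma nur_pt W a : scott_open W -> Nset a -> W a ->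
  nur (W `&` Ua a) - nur (W `&` Va a) = mass a.
Proof.
move=> oW Na Wa; have := nur_mod (open_setI oW (open_Ua Na)) (open_Va Na).
rewrite /mass Ua_setU1 //.
have -> : W `&` ([set a] `|` Va a) `|` Va a = [set a] `|` Va a.
  apply/seteqP; split => x; first by case=> [[_ [->|]]|]; [left|right|right].
  by case=> [->|]; [left; split => //; left|right].
have -> : W `&` ([set a] `|` Va a) `&` Va a = W `&` Va a.
  apply/seteqP; split => x; first by case=> -[Wx _].
  by case=> Wx Vx; split => //; split => //; right.
lra.
Qed.

Lemma nu_ptE W a : scott_open W -> Nset a ->
  nu_pt nu a W = if a \in W then (mass a)%:E else 0%E.
Proof.
move=> oW Na; have oWU := open_setI oW (open_Ua Na).
have oWV := open_setI oW (open_Va Na).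
rewrite /nu_pt !nurE // -EFinB.
case: ifPn => [/set_mem Wa|/negP Wa]; first by rewrite nur_pt.
suff -> : W `&` Ua a = W `&` Va a by rewrite subrr.
rewrite Ua_setU1 //; apply/seteqP; split => x; last by case=> Wx Vx; split => //; right.
by case=> Wx [xa|//]; case: Wa; rewrite -xa; apply/mem_set.
Qed.

Lemma nur_setU1 A a : scott_open A -> Nset a -> ~ A a ->
  upper_set (A `|` [set a]) -> nur (A `|` [set a]) = nur A + mass a.
Proof.
move=> oA Na nAa uAa.
have oAa : scott_open (A `|` [set a]) by apply: open_setU_nonmax => // x ->.
have := nur_pt oAa Na (or_intror erefl).
have := nur_mod oA (open_setI oAa (open_Ua Na)).
rewrite Ua_setU1 //.
have -> : A `|` (A `|` [set a]) `&` ([set a] `|` Va a) = A `|` [set a].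
  apply/seteqP; split => x; first by case=> [Ax|[]]; [left|].
  by case=> [Ax|->]; [left|right; split; [right|left]].
have -> : A `&` ((A `|` [set a]) `&` ([set a] `|` Va a)) = A `&` Va a.
  apply/seteqP; split => x; last by case=> Ax Vx; split => //; split; [left|right].
  by case=> Ax [_ [xa|//]]; case: nAa; rewrite -xa.
have -> : (A `|` [set a]) `&` Va a = A `&` Va a.
  apply/seteqP; split => x; last by case=> Ax Vx; split => //; left.
  case=> [[Ax|xa] Vx]; first by split.
  by move: Vx; rewrite xa => /notin_Va.
lra.
Qed.

Lemma nur_setU_finite U S : scott_open U -> finite_set S ->
  S `<=` Nset `\` U -> upper_set (U `|` S) ->
  nur (U `|` S) = nur U + \sum_(x \in S) mass x.
Proof.
move=> oU; move: S; apply: finite_set_ind => S finS IH SNU uUS.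
have [->|/set0P S0] := eqVneq S set0; first by rewrite setU0 fsbig_set0 addr0.
have [a Sa amin] := exists_argmin_nat level S0.
have [Na nUa] := SNU _ Sa.
(* Nothing in U `|` S `\ a lies below a, as a has minimal level in S. *)
have uUSa : upper_set (U `|` S `\ a).
  move=> x y Sx xy; have USx : (U `|` S) x by case: Sx => [?|[? _]]; [left|right].
  have [Uy|Sy] := uUS x y USx xy; first by left.
  have [ya|ya] := pselect (y = a); last by right.
  case: Sx => [Ux|[Sx xa]].
    by case: nUa; rewrite -ya; apply: open_upper oU _ _ Ux xy.
  case: a ya xa Sa amin Na {nUa} => j [n|] // ya xa Sa amin _; rewrite ya in xy.
  by case: xa; apply: Jle_nonmax_level xy (amin _ Sx).
have eqUS : U `|` S = (U `|` S `\ a) `|` [set a].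
  by rewrite -[in LHS](setD1K Sa) setUCA setUC.
rewrite eqUS in uUS *; rewrite nur_setU1 //.
- rewrite (IH a Sa) //; last by move=> x [/SNU].
  by rewrite (fsbigD1 a S) //=; lra.
- by apply: open_setU_nonmax => // x [/SNU[]].
- by case=> [//|[_]]; apply.
Qed.

Lemma nur_add_fsum_le U V S : scott_open U -> scott_open V -> U `<=` V ->
  finite_set S -> S `<=` (Nset `&` V) `\` U ->
  nur U + \sum_(x \in S) mass x <= nur V.
Proof.
move=> oU oV UV finS SV; have [M SM] := finite_set_bounded level finS.
(* W has the maximal points of V but misses S, so that only finitely many
   points of V \ W lie above S. *)
pose W := U `|` (V `&` above M).
have oW : scott_open W := open_setU oU (open_setI oV (open_above M)).
have WV : W `<=` V by move=> x [/UV|[]].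
have VW : maxpts V `<=` maxpts W by move=> c Vc; right.
pose T := \bigcup_(s in S) gap_above W V s.
have finT : finite_set T.
  apply: bigcup_finite => // s /SV[[_ Vs] _].
  exact: finite_gap_above oW (open_upper oV) VW Vs.
have ST : S `<=` T.
  move=> s Ss; exists s => //; split; last exact: Jle_refl.
  have [[Ns Vs] nUs] := SV _ Ss; split=> //; case=> // -[_].
  by case: s Ss Ns {Vs nUs} => j [k|] // /SM; rewrite /above /level /= ltnNge => /negP.
have TW : T `<=` Nset `\` W by move=> x [s _ [[[Nx _] nWx] _]].
have uWT : upper_set (W `|` T).
  exact: upper_setU_gap_above (open_upper oW) (open_upper oV) VW.
have WTV : W `|` T `<=` V by move=> x [/WV|[s _ [[[_ Vx] _] _]]].
have := nur_le (open_setU_nonmax oW (fun x Tx => (TW x Tx).1) uWT) oV WTV.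
rewrite nur_setU_finite //.
have := nur_le oU oW (fun x Ux => or_introl Ux).
have : \sum_(x \in S) mass x <= \sum_(x \in T) mass x.
  rewrite (fsbigID S T) //= setIidr // lerDl.
  by apply: fsumr_ge0 => x [[s _ [[[Nx _] _] _]] _]; apply: mass_ge0.
lra.
Qed.

Lemma nur_add_esum_le U V : scott_open U -> scott_open V -> U `<=` V ->
  ((nur U)%:E + \esum_(i in (Nset `&` V) `\` U) (mass i)%:E <= (nur V)%:E)%E.
Proof.
move=> oU oV UV; rewrite addeC -leeBrDr // -EFinB.
apply: ge_ereal_sup => _ [X [finX XS] <-]; rewrite fsumEFin // lee_fin lerBrDl.
exact: nur_add_fsum_le.
Qed.

Definition gap U V : R := fine (\esum_(i in (Nset `&` V) `\` U) (mass i)%:E).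

Lemma gapE U V : scott_open U -> scott_open V -> U `<=` V ->
  \esum_(i in (Nset `&` V) `\` U) (mass i)%:E = (gap U V)%:E.
Proof.
move=> oU oV UV; rewrite fineK // ge0_fin_numE; last first.
  by apply: esum_ge0 => x [[Nx _] _]; rewrite lee_fin mass_ge0.
rewrite (le_lt_trans _ (ltry (nur V - nur U))) // EFinB leeBrDr // addeC.
exact: nur_add_esum_le.
Qed.

Lemma nur_add_gap_le U V : scott_open U -> scott_open V -> U `<=` V ->
  nur U + gap U V <= nur V.
Proof. by move=> oU oV UV; rewrite -lee_fin EFinD -gapE // nur_add_esum_le. Qed.

Lemma gap_trans U V W : scott_open U -> scott_open V -> scott_open W ->
  U `<=` V -> V `<=` W -> gap U W = gap U V + gap V W.
Proof.
move=> oU oV oW UV VW; apply: EFin_inj.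
rewrite EFinD -!gapE //; last exact: subset_trans VW.
rewrite (esumID V); last by move=> x [[Nx _] _]; rewrite lee_fin mass_ge0.
congr (_ + _)%E; congr esum; apply/seteqP; split => x /=.
- by case=> -[[Nx _] nUx] Vx.
- by move=> [[Nx Vx] nUx]; split => //; split => //; split => //; apply: VW.
- by case=> -[[Nx Wx] _] nVx; split => //; split.
- by move=> [[Nx Wx] nVx]; split => //; split => [|/UV].
Qed.

Lemma gap_setU_setI U V : gap U (U `|` V) = gap (U `&` V) V.
Proof.
rewrite /gap; congr (fine (esum _ _)); apply/seteqP; split => x /=.
- by case=> -[Nx [Ux|Vx]] nUx //; split => // -[].
- by case=> -[Nx Vx] nUVx; split => [|Ux]; [split; [|right]|apply: nUVx].
Qed.

Lemma nu_starE U : scott_open U -> nu_star nu U = (nur U - gap set0 U)%:E.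
Proof.
move=> oU; rewrite EFinB -(gapE open_set0 oU (sub0set U)) setD0 -nurE //.
rewrite /nu_star esum_mkcondr.
by congr (_ - _)%E; apply: eq_esum => a Na; rewrite nu_ptE.
Qed.

Lemma nu_star_le U V : scott_open U -> scott_open V -> U `<=` V ->
  (nu_star nu U <= nu_star nu V)%E.
Proof.
move=> oU oV UV; rewrite !nu_starE // lee_fin.
rewrite (gap_trans open_set0 oU oV (sub0set U) UV).
by have := nur_add_gap_le oU oV UV; lra.
Qed.

Lemma nu_star0 : nu_star nu set0 = 0%E.
Proof.
by rewrite (nu_starE open_set0) nur0 /gap setI0 set0D esum_set0 subrr.
Qed.

Lemma nu_star_mod U V : scott_open U -> scott_open V ->
  (nu_star nu U + nu_star nu V = nu_star nu (U `|` V) + nu_star nu (U `&` V))%E.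
Proof.
move=> oU oV; have oUV := open_setU oU oV; have oIUV := open_setI oU oV.
rewrite !nu_starE // -!EFinD; congr EFin.
have := gap_trans open_set0 oU oUV (sub0set U) (@subsetUl _ U V).
have := gap_trans open_set0 oIUV oV (sub0set _) (@subIsetr _ U V).
by have := nur_mod oU oV; rewrite gap_setU_setI; lra.
Qed.

Lemma nu_star_valuation : valuation (nu_star nu).
Proof.
split; [exact: nu_star0|move=> U oU|exact: nu_star_le|exact: nu_star_mod].
by rewrite -nu_star0; apply: nu_star_le => //; apply: open_set0.
Qed.

Hypothesis nu_cont : forall F : set (set J), (forall U, F U -> scott_open U) ->
  directed_family F -> nu (\bigcup_(U in F) U) = ereal_sup (nu @` F).

Lemma nur_le_add_esum U V : scott_open U -> scott_open V -> U `<=` V ->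
  maxpts V `<=` maxpts U ->
  ((nur V)%:E <= (nur U)%:E + \esum_(i in (Nset `&` V) `\` U) (mass i)%:E)%E.
Proof.
move=> oU oV UV VU; have extO S := @open_finite_extension U V S oU.
rewrite -nurE // {1}(bigcup_finite_extensions oU oV UV VU).
rewrite nu_cont => [|_ [S /extO ? <-] //|]; last first.
  exact: directed_finite_extensions (open_upper oU).
apply: ge_ereal_sup => _ [_ [S extS <-] <-]; case: (extS) => finS SV uUS.
rewrite (nurE (extO _ extS)) nur_setU_finite //; last by move=> x /SV[[]].
by rewrite EFinD leeD2l // -fsumEFin //; apply: esum_ge; exists S.
Qed.

Lemma nur_le_add_gap U V : scott_open U -> scott_open V -> U `<=` V ->
  maxpts V `<=` maxpts U -> nur V <= nur U + gap U V.
Proof. by move=> oU oV UV VU; rewrite -lee_fin EFinD -gapE // nur_le_add_esum. Qed.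

Lemma nu_star_continuous F : (forall U, F U -> scott_open U) ->
  directed_family F ->
  nu_star nu (\bigcup_(U in F) U) = ereal_sup (nu_star nu @` F).
Proof.
move=> FO dF; have oW := open_bigcup FO.
apply/eqP; rewrite eq_le; apply/andP; split; last first.
  apply: ge_ereal_sup => _ [U FU <-]; apply: nu_star_le => //; first exact: FO.
  by move=> x Ux; exists U.
have [U0 FU0 WU0] := directed_open_maxpts FO dF; have oU0 := FO _ FU0.
have U0W : U0 `<=` \bigcup_(U in F) U by move=> x U0x; exists U0.
apply: le_trans (ereal_sup_ubound (ex_intro2 _ _ U0 FU0 erefl)).
rewrite !nu_starE // lee_fin (gap_trans open_set0 oU0 oW (sub0set U0) U0W).
by have := nur_le_add_gap oU0 oW U0W WU0; lra.
Qed.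

End PointMasses.

Theorem proposition3p7 (R : realType) (nu : set J -> \bar R) :
  bounded_valuation nu -> continuous_valuation nu ->
  bounded_valuation (nu_star nu) /\ continuous_valuation (nu_star nu).
Proof.
move=> [[nu0 nu_ge0 nu_le nu_mod] nuT] [_ nu_cont].
have star_val := nu_star_valuation nu0 nu_ge0 nu_le nu_mod nuT.
split; split=> //; last exact: nu_star_continuous.
by rewrite (nu_starE nu_ge0 nu_le nu_mod nuT open_setT) ltry.
Qed.
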